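(* Let $k\le n$ be positive integers and $A\in\mathbb{C}^{n\times n}$ with eigenvalues ordered so that $|\lambda_1(A)|\ge\cdots\ge|\lambda_n(A)|$. Then $$\left|\prod_{i=1}^k\lambda_i(A)\right|\le\left(\frac nk\right)^{k/2}\sqrt n^{\,k}\min\left\{\max_{|\alpha|=k}\prod_{i\in\alpha}\|\mathrm{col}_i(A)\|_\infty,\ \max_{|\alpha|=k}\prod_{i\in\alpha}\|\mathrm{row}_i(A)\|_\infty\right\},$$ where the maxima are over subsets $\alpha\subseteq\{1,\ldots,n\}$ with $|\alpha|=k$.
   Context: $\mathrm{col}_i(A)$ is the $i$th column and $\mathrm{row}_i(A)$ the (transposed) $i$th row of $A$; $\|\cdot\|_\infty$ is the maximum-modulus vector norm. *)

From HB Require Import structures.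
From mathcomp Require Import all_boot all_order all_algebra.
From mathcomp Require Import reals.
From mathcomp.real_closed Require Import complex.
Set Implicit Arguments. Unset Strict Implicit. Unset Printing Implicit Defensive.
Import Order.TTheory GRing.Theory Num.Theory.
Local Open Scope ring_scope.

Definition cmod (R : realType) (z : R[i]) : R := Normc.normc z.

Definition colnorm (R : realType) (n : nat) (A : 'M[R[i]]_n) (i : 'I_n) : R :=
  \big[Num.max/0]_(j < n) cmod (A j i).
Definition rownorm (R : realType) (n : nat) (A : 'M[R[i]]_n) (i : 'I_n) : R :=
  \big[Num.max/0]_(j < n) cmod (A i j).

Definition max_subset_prod (R : realType) (n k : nat) (f : 'I_n -> R) : R :=
  \big[Num.max/0]_(alpha : {set 'I_n} | #|alpha| == k) \prod_(i in alpha) f i.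

From HB Require Import structures.
From mathcomp Require Import all_boot all_order all_algebra.
From mathcomp Require Import reals.
From mathcomp.real_closed Require Import complex.
From mathcomp Require Import fingroup perm ring.
Set Implicit Arguments. Unset Strict Implicit. Unset Printing Implicit Defensive.
Import Order.TTheory GRing.Theory Num.Theory.
Local Open Scope ring_scope.

(* Schur-triangularise A unitarily so that the chosen eigenvalues sit on the diagonal,
   and let Y be the corresponding k orthonormal Schur vectors: then det (Y A Y^* ) is
   the product of those eigenvalues.  For any X, det (Y X (Y X)^* ) is at most
   (tr (X X^* ) / k)^k det (Y Y^* ) (orthonormalise Y, then AM-GM on the eigenvalues
   of the Gram matrix and Bessel's inequality).  Applied twice, with A^* = D B^*
   where D is the diagonal of column norms and |B_ij| <= 1, this gives
   |det (Y A Y^* )|^2 <= (n^2/k)^k det (Y D^2 Y^* ), and by Cauchy-Binet the last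
   determinant is a convex combination of products of k squared column norms.
   The row bound is the column bound for A^T. *)

Definition set_diag_mx (R : nzSemiRingType) n (g : {set 'I_n}) : 'M[R]_n :=
  diag_mx (\row_i (i \in g)%:R).

Lemma det_mulmx_ffun (R : comNzRingType) k n (X : 'M[R]_(k, n)) (Z : 'M[R]_(n, k)) :
  \det (X *m Z) = \sum_(f : {ffun 'I_k -> 'I_n}) \det (colsub f X) * \prod_j Z (f j) j.
Proof.
rewrite /determinant.
transitivity (\sum_(s : 'S_k) \sum_(f : {ffun 'I_k -> 'I_n})
    (-1) ^+ s * \prod_i (X i (f i) * Z (f i) (s i))).
  apply: eq_bigr => s _; rewrite -big_distrr; congr (_ * _).
  under eq_bigr do rewrite mxE.
  by rewrite bigA_distr_bigA.
under [RHS]eq_bigr do rewrite big_distrl.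
rewrite [RHS]exchange_big; apply: eq_bigr => s _ /=.
rewrite (reindex (fun f : {ffun 'I_k -> 'I_n} => [ffun i => f (s i)])) /=; last first.
  exists (fun f : {ffun 'I_k -> 'I_n} => [ffun i => f ((s^-1)%g i)]) => f _;
  by apply/ffunP => i; rewrite !ffunE ?permKV ?permK.
apply: eq_bigr => f _; rewrite -mulrA; congr (_ * _).
under eq_bigr do rewrite ffunE.
rewrite big_split /=; congr (_ * _).
  by apply: eq_bigr => i _; rewrite mxE.
by rewrite [RHS](reindex_perm s).
Qed.

Section CauchyBinet.
Variables (R : comNzRingType) (k n : nat) (X : 'M[R]_(k, n)) (Z : 'M[R]_(n, k)).

Let weight (g : {set 'I_n}) : R :=
  \sum_(f : {ffun 'I_k -> 'I_n} | injectiveb f && (f @: setT == g))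
    \det (colsub f X) * \prod_j Z (f j) j.

Let det_mulmx_diag_weight (e : 'rV[R]_n) :
  \det (X *m diag_mx e *m Z) =
  \sum_(g : {set 'I_n} | #|g| == k) (\prod_(i in g) e 0 i) * weight g.
Proof.
rewrite -mulmxA det_mulmx_ffun.
under eq_bigr => f _.
  under [X in _ * X]eq_bigr do rewrite mul_diag_mx mxE.
  rewrite big_split /= mulrCA.
  over.
rewrite (bigID (fun f : {ffun 'I_k -> 'I_n} => injectiveb f)) /=.
rewrite [X in _ + X]big1 ?addr0; last first.
  move=> f /injectivePn [j1 [j2 neq_j Efj]].
  rewrite -det_tr (determinant_alternate neq_j) ?mul0r ?mulr0 // => i.
  by rewrite !mxE Efj.
rewrite (partition_big (fun f : {ffun 'I_k -> 'I_n} => f @: setT)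
            (fun g => #|g| == k)) /=; last first.
  by move=> f /injectiveP f_inj; rewrite card_imset // cardsT card_ord.
apply: eq_bigr => g _; rewrite /weight big_distrr /=.
apply: eq_bigr => f /andP [/injectiveP f_inj /eqP <-].
rewrite big_imset /=; last by move=> x y _ _; apply: f_inj.
by congr (_ * _); apply: eq_bigl => j; rewrite inE.
Qed.

Let weightE (g : {set 'I_n}) : #|g| = k -> weight g = \det (X *m set_diag_mx R g *m Z).
Proof.
move=> card_g; rewrite det_mulmx_diag_weight (bigD1 g) /=; last by rewrite card_g.
rewrite [X in _ + X]big1 ?addr0; last first.
  move=> h /andP [/eqP card_h neq_hg].
  have /subsetPn [i hi gNi] : ~~ (h \subset g).
    by apply: contra neq_hg => sub_hg; rewrite eqEcard sub_hg card_h card_g leqnn.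
  by rewrite (bigD1 i) //= mxE (negbTE gNi) !mul0r.
by rewrite big1 ?mul1r // => i gi; rewrite mxE gi.
Qed.

Lemma det_mulmx_diag_expand (e : 'rV[R]_n) :
  \det (X *m diag_mx e *m Z) =
  \sum_(g : {set 'I_n} | #|g| == k)
    (\prod_(i in g) e 0 i) * \det (X *m set_diag_mx R g *m Z).
Proof.
rewrite det_mulmx_diag_weight.
by apply: eq_bigr => g /eqP card_g; rewrite weightE.
Qed.

End CauchyBinet.

Lemma det_trig_mxsub (R : comNzRingType) n k (T : 'M[R]_n) (g : 'I_k -> 'I_n) :
  injective g -> is_trig_mx T -> \det (mxsub g g T) = \prod_i T (g i) (g i).
Proof.
move=> g_inj /is_trig_mxP T_trig.
rewrite /determinant (bigD1 1%g) //= [X in _ + X]big1 ?addr0.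
  by rewrite odd_perm1 expr0 mul1r; apply: eq_bigr => i _; rewrite mxE perm1.
move=> s s_neq1; have [/existsP [i /eqP Ti0] | /existsP Tnz] :=
  boolP [exists i, T (g i) (g (s i)) == 0].
  by rewrite (bigD1 i) //= mxE Ti0 mul0r mulr0.
(* A nonzero term forces [g (s i) <= g i] for all [i]; as the sums agree, [s] is the identity. *)
have le_gs i : (g (s i) <= g i)%N.
  by rewrite leqNgt; apply/negP => lt_gi; apply: Tnz; exists i; rewrite T_trig.
have sum_gs : (\sum_i g (s i) = \sum_i g i)%N by rewrite [RHS](reindex_perm s).
have : (\sum_i (g i - g (s i)) == 0)%N.
  rewrite -(eqn_add2l (\sum_i g (s i))) addn0 -big_split /= sum_gs.
  by apply/eqP; apply: eq_bigr => j _; rewrite subnKC.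
rewrite sum_nat_eq0 => /forallP gs_eq; case/eqP: s_neq1; apply/permP => i.
apply: g_inj; apply/val_inj/eqP; rewrite perm1 eqn_leq le_gs /=.
by have := gs_eq i; rewrite subn_eq0.
Qed.

Lemma char_poly_conj (F : fieldType) n (P A : 'M[F]_n) :
  P \in unitmx -> char_poly (P *m A *m invmx P) = char_poly A.
Proof.
move=> P_unit; rewrite /char_poly /char_poly_mx.
set mP := map_mx polyC P; set mPi := map_mx polyC (invmx P).
have mPK : mP *m mPi = 1%:M by rewrite -map_mxM mulmxV // map_mx1.
have -> : 'X%:M - map_mx polyC (P *m A *m invmx P) =
          mP *m ('X%:M - map_mx polyC A) *m mPi.
  rewrite mulmxBr mulmxBl !map_mxM -/mP -/mPi.
  by rewrite scalar_mxC -(mulmxA _ mP) mPK mulmx1.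
by rewrite !det_mulmx mulrAC -det_mulmx mPK det1 mul1r.
Qed.

Lemma char_poly_trmx (R : comNzRingType) n (A : 'M[R]_n) :
  char_poly A^T = char_poly A.
Proof.
rewrite /char_poly -det_tr; congr determinant.
by rewrite /char_poly_mx linearB /= tr_scalar_mx map_trmx trmxK.
Qed.

Lemma colscale_factor (F : numFieldType) m n (A : 'M[F]_(m, n)) (c : 'I_n -> F) :
  (forall i j, `|A i j| <= c j) ->
  exists2 B : 'M[F]_(m, n), A = B *m diag_mx (\row_j c j) & forall i j, `|B i j| <= 1.
Proof.
move=> le_Ac.
exists (\matrix_(i, j) (if c j == 0 then 0 else A i j / c j)) => [|i j].
  apply/matrixP => i j; rewrite mul_mx_diag !mxE.
  have [cj0 | cj_neq0] := eqVneq (c j) 0; last by rewrite divfK.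
  by rewrite mul0r; apply/eqP; rewrite -normr_le0 -cj0.
rewrite mxE; have [_ | cj_neq0] := eqVneq (c j) 0; first by rewrite normr0.
have cj_gt0 : 0 < c j by rewrite lt_def cj_neq0 (le_trans _ (le_Ac i j)).
by rewrite normrM normfV (gtr0_norm cj_gt0) ler_pdivrMr // mul1r.
Qed.

Section Gram.
Variable C : numClosedFieldType.
Local Open Scope sesquilinear_scope.

Lemma trmxC_mul m p q (A : 'M[C]_(m, p)) (B : 'M[C]_(p, q)) :
  (A *m B)^t* = B^t* *m A^t*.
Proof. by rewrite trmx_mul map_mxM. Qed.

Lemma gram_diag_ge0 m p (W : 'M[C]_(m, p)) i : 0 <= (W *m W^t*) i i.
Proof. by rewrite mxE; apply: sumr_ge0 => j _; rewrite !mxE mul_conjC_ge0. Qed.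

Lemma mxtrace_gram_ge0 m p (W : 'M[C]_(m, p)) : 0 <= \tr (W *m W^t*).
Proof. by apply: sumr_ge0 => i _; apply: gram_diag_ge0. Qed.

Lemma gram_eigen k p (W : 'M[C]_(k, p)) : exists2 d : 'rV[C]_k,
  forall i, 0 <= d 0 i &
  \det (W *m W^t*) = \prod_i d 0 i /\ \tr (W *m W^t*) = \sum_i d 0 i.
Proof.
set H := W *m W^t*.
have H_normal : H \is normalmx by apply/normalmxP; rewrite trmxC_mul trmxCK.
have HE := orthomx_spectralP H_normal.
set P := spectralmx H in HE; set d := spectral_diag H in HE.
have P_unitary : P \is unitarymx := spectral_unitarymx H.
have P_unit : P \in unitmx := unitarymx_unit P_unitary.
exists d => [i|]; last split.
- have dE : diag_mx d = (P *m W) *m (P *m W)^t*.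
    rewrite trmxC_mul mulmxA -(mulmxA P W) -/H HE -(invmx_unitary P_unitary).
    by rewrite !mulmxA mulmxV // mul1mx mulmxK.
  by have := gram_diag_ge0 (P *m W) i; rewrite -dE mxE eqxx mulr1n.
- by rewrite HE !det_mulmx mulrAC -det_mulmx mulVmx // det1 mul1r det_diag.
- by rewrite HE mxtrace_mulC mulmxA mulmxV // mul1mx mxtrace_diag.
Qed.

Lemma det_gram_ge0 k p (W : 'M[C]_(k, p)) : 0 <= \det (W *m W^t*).
Proof. by have [d d_ge0 [-> _]] := gram_eigen W; apply: prodr_ge0. Qed.

Lemma det_gram_le_mxtrace k p (W : 'M[C]_(k, p)) :
  \det (W *m W^t*) <= (\tr (W *m W^t*) / k%:R) ^+ k.
Proof.
have [d d_ge0 [-> ->]] := gram_eigen W.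
have := @leif_AGM C 'I_k predT (fun i => d 0 i) (fun i _ => d_ge0 i).
by rewrite /= cardT size_enum_ord => /leifP; case: ifP => [_ /eqP -> | _ /ltW].
Qed.

(* [Y^t* *m Y] is an orthogonal projection, which can only decrease the Frobenius norm. *)
Lemma mxtrace_gram_unitary_mul_le k n m (Y : 'M[C]_(k, n)) (B : 'M[C]_(n, m)) :
  Y \is unitarymx -> \tr ((Y *m B) *m (Y *m B)^t*) <= \tr (B *m B^t*).
Proof.
move=> /unitarymxP YY.
set P := Y^t* *m Y.
have P_adj : P^t* = P by rewrite trmxC_mul trmxCK.
have PP : P *m P = P by rewrite mulmxA -(mulmxA _ Y) YY mulmx1.
set Q := 1%:M - P.
have QQ : Q *m Q^t* = Q.
  rewrite /Q [(_ - _)^T]linearB /= map_mxB P_adj trmx1 map_mx1.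
  by rewrite mulmxBl !mulmxBr !mul1mx mulmx1 PP subrr subr0.
rewrite mxtrace_mulC [X in _ <= X]mxtrace_mulC -subr_ge0.
have -> : \tr (B^t* *m B) - \tr ((Y *m B)^t* *m (Y *m B))
    = \tr ((B^t* *m Q) *m (B^t* *m Q)^t*).
  rewrite !trmxC_mul trmxCK [in RHS]mulmxA -[in RHS](mulmxA _ Q) QQ.
  by rewrite /Q mulmxBr mulmx1 mulmxBl linearB /= !mulmxA.
exact: mxtrace_gram_ge0.
Qed.

Lemma det_gram_mul_le k n m (Y : 'M[C]_(k, n)) (B : 'M[C]_(n, m)) :
  \det ((Y *m B) *m (Y *m B)^t*) <= (\tr (B *m B^t*) / k%:R) ^+ k * \det (Y *m Y^t*).
Proof.
have [Y_free | Y_nfree] := boolP (row_free Y); last first.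
  have det0 p (M : 'M[C]_(n, p)) (N : 'M[C]_(p, k)) : \det (Y *m M *m N) = 0.
    apply/eqP; move: Y_nfree; apply: contraNT; rewrite -unitfE -unitmxE -row_free_unit.
    move=> /eqP rkYMN; rewrite /row_free eqn_leq rank_leq_row /=.
    rewrite -[X in (X <= _)%N]rkYMN.
    exact: leq_trans (mxrankM_maxl _ _) (mxrankM_maxl _ _).
  by rewrite -[Y *m Y^t*]mulmx1 !det0 mulr0.
(* Reduce to orthonormal rows: [Y = D *m schmidt Y], and [D] factors out of both sides. *)
set Z := schmidt Y.
have Z_unitary : Z \is unitarymx.
  by apply: schmidt_unitarymx; rewrite -(eqP Y_free) rank_leq_col.
have /submxP [D YE] : (Y <= Z)%MS by rewrite eqmx_schmidt_free.
have gramE p (M : 'M[C]_(n, p)) : \det ((Y *m M) *m (Y *m M)^t*) =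
    \det (D *m D^t*) * \det ((Z *m M) *m (Z *m M)^t*).
  have -> : (Y *m M) *m (Y *m M)^t* = D *m ((Z *m M) *m (Z *m M)^t*) *m D^t*.
    by rewrite YE !trmxC_mul !mulmxA.
  by rewrite !det_mulmx mulrAC.
rewrite -[Y in X in _ <= _ * X]mulmx1 gramE [X in _ <= X]mulrC gramE.
rewrite !mulmx1 (unitarymxP Z_unitary) det1 mulr1.
apply: ler_wpM2l; first exact: det_gram_ge0.
apply: le_trans (det_gram_le_mxtrace _) _.
apply: lerXn2r; rewrite ?nnegrE ?divr_ge0 ?mxtrace_gram_ge0 ?ler0n //.
by apply: ler_wpM2r; rewrite ?invr_ge0 ?ler0n ?mxtrace_gram_unitary_mul_le.
Qed.

Lemma set_diag_mx_gram n (g : {set 'I_n}) :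
  set_diag_mx C g *m (set_diag_mx C g)^t* = set_diag_mx C g.
Proof.
rewrite /set_diag_mx tr_diag_mx map_diag_mx mul_diag_mx.
apply/matrixP => i j; rewrite !mxE.
by case: (i \in g); rewrite /= ?mulr1n ?mulr0n ?conjC1 ?conjC0 ?mul1r ?mul0r ?mul0rn.
Qed.

(* By Cauchy-Binet, [det (Y diag(e) Y^* )] is a combination of the products of the
   [e i] over the [k]-subsets with nonnegative weights summing to [det (Y Y^* )]. *)
Lemma det_gram_diag_le k n (Y : 'M[C]_(k, n)) (e : 'rV[C]_n) (M : C) :
  (forall g : {set 'I_n}, #|g| = k -> \prod_(i in g) e 0 i <= M) ->
  \det (Y *m diag_mx e *m Y^t*) <= M * \det (Y *m Y^t*).
Proof.
move=> le_eM.
have -> : Y *m Y^t* = Y *m diag_mx (const_mx 1) *m Y^t*.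
  by rewrite diag_const_mx mulmx1.
rewrite !det_mulmx_diag_expand mulr_sumr; apply: ler_sum => g /eqP card_g.
have -> : \prod_(i in g) (const_mx 1 : 'rV[C]_n) 0 i = 1.
  by apply: big1 => i _; rewrite mxE.
rewrite mul1r; apply: ler_wpM2r; last exact: le_eM.
have -> : Y *m set_diag_mx C g *m Y^t* =
    (Y *m set_diag_mx C g) *m (Y *m set_diag_mx C g)^t*.
  by rewrite trmxC_mul mulmxA -[in RHS](mulmxA Y) set_diag_mx_gram.
exact: det_gram_ge0.
Qed.

End Gram.

Section Compression.
Variable C : numClosedFieldType.
Local Open Scope sesquilinear_scope.

Lemma rowsub_conj m n k (g : 'I_k -> 'I_m) (P : 'M[C]_(m, n)) (A : 'M[C]_n) :
  rowsub g P *m A *m (rowsub g P)^t* = mxsub g g (P *m A *m P^t*).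
Proof. by rewrite trmx_mxsub map_mxsub mul_rowsub_mx -mxsub_mul. Qed.

Lemma schur_eigen_perm n (A : 'M[C]_n) (lam : 'I_n -> C) :
  (0 < n)%N -> char_poly A = \prod_j ('X - (lam j)%:P) ->
  exists P : 'M[C]_n, exists s : 'S_n, [/\ P \is unitarymx,
    is_trig_mx (P *m A *m P^t*) & forall j, lam j = (P *m A *m P^t*) (s j) (s j)].
Proof.
move=> n_gt0 charA; have [P P_unitary] := Schur A n_gt0.
rewrite /similar_to conjymx // => T_trig; set T := P *m A *m P^t* in T_trig *.
have charT : char_poly T = char_poly A.
  by rewrite /T -invmx_unitary // char_poly_conj ?unitarymx_unit.
rewrite char_poly_trig // charA in charT.
have : perm_eq [tuple lam j | j < n] [tuple T i i | i < n].
  apply: prod_XsubC_eq; rewrite !big_tuple.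
  under eq_bigr do rewrite tnth_mktuple.
  by under [RHS]eq_bigr do rewrite tnth_mktuple.
case/tuple_permP => s lamE; exists P, s; split => // j.
by have := congr1 (fun t => nth 0 t j) lamE; rewrite /= !nth_mktuple tnth_mktuple.
Qed.

Lemma unitary_compress_det_eigen n k (A : 'M[C]_n) (lam : 'I_n -> C) :
  (0 < n)%N -> (k <= n)%N -> char_poly A = \prod_j ('X - (lam j)%:P) ->
  exists2 Y : 'M[C]_(k, n), Y \is unitarymx &
    \det (Y *m A *m Y^t*) = \prod_(j < n | (j < k)%N) lam j.
Proof.
move=> n_gt0 le_kn charA.
have [P [s [P_unitary T_trig lamE]]] := schur_eigen_perm n_gt0 charA.
pose g (j : 'I_k) := s (widen_ord le_kn j).
have g_inj : injective g by move=> x y /perm_inj /(congr1 val) /= /val_inj.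
exists (rowsub g P).
  apply/unitarymxP; have := rowsub_conj g P 1%:M.
  rewrite !mulmx1 (unitarymxP P_unitary) => ->; apply/matrixP => i j.
  by rewrite !mxE (inj_eq g_inj).
rewrite rowsub_conj det_trig_mxsub // big_ord_narrow.
by apply: eq_bigr => j _; rewrite lamE.
Qed.

Lemma det_compress_sqr_le n k (A : 'M[C]_n) (Y : 'M[C]_(k, n)) :
  Y \is unitarymx ->
  `|\det (Y *m A *m Y^t*)| ^+ 2 <= \det ((Y *m A^t*) *m (Y *m A^t*)^t*).
Proof.
move=> Y_unitary; set W := Y *m A *m Y^t*.
have WE : W^t* = (Y *m A^t*) *m Y^t* by rewrite !trmxC_mul trmxCK mulmxA.
have -> : `|\det W| ^+ 2 = \det (W^t* *m W^t*^t*).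
  by rewrite normCK trmxCK det_mulmx !det_map_mx !det_tr mulrC.
rewrite WE; apply: le_trans (det_gram_mul_le _ _) _.
rewrite trmxCK mxtrace_mulC (unitarymxP Y_unitary) mxtrace_scalar.
suff -> : (k%:R / k%:R : C) ^+ k = 1 by rewrite mul1r.
by case: k {A Y W WE Y_unitary} => [|k]; rewrite ?expr0 // divff ?expr1n ?pnatr_eq0.
Qed.

Lemma det_gram_colscale_le n k (A : 'M[C]_n) (Y : 'M[C]_(k, n)) (c : 'I_n -> C) :
  (forall i j, `|A i j| <= c j) ->
  \det ((Y *m A^t*) *m (Y *m A^t*)^t*)
    <= (n%:R ^+ 2 / k%:R) ^+ k * \det (Y *m diag_mx (\row_j c j ^+ 2) *m Y^t*).
Proof.
move=> le_Ac; have [B AE le_B1] := colscale_factor le_Ac.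
set D := diag_mx _ in AE.
have c_ge0 j : 0 <= c j by apply: le_trans (le_Ac j j).
have D_adj : D^t* = D.
  rewrite tr_diag_mx map_diag_mx; congr diag_mx; apply/rowP => j.
  by rewrite !mxE; apply: conj_Creal; rewrite ger0_real.
have -> : Y *m A^t* = (Y *m D) *m B^t* by rewrite AE trmxC_mul D_adj mulmxA.
apply: le_trans (det_gram_mul_le _ _) _.
have -> : Y *m diag_mx (\row_j c j ^+ 2) *m Y^t* = Y *m D *m (Y *m D)^t*.
  rewrite trmxC_mul D_adj !mulmxA -(mulmxA Y D) mul_diag_mx; congr (_ *m _ *m _).
  apply/matrixP => i j; rewrite !mxE.
  by case: eqVneq => [->|_]; rewrite ?mulr1n ?mulr0n ?mulr0.
apply: ler_wpM2r; first exact: det_gram_ge0.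
apply: lerXn2r; rewrite ?nnegrE ?divr_ge0 ?mxtrace_gram_ge0 ?exprn_ge0 ?ler0n //.
apply: ler_wpM2r; first by rewrite invr_ge0 ler0n.
rewrite trmxCK mxtrace_mulC; apply: le_trans (_ : _ <= \sum_(i < n) \sum_(j < n) 1) _.
  apply: ler_sum => i _; rewrite mxE; apply: ler_sum => j _.
  by rewrite !mxE -normCK exprn_ile1.
by rewrite !sumr_const !card_ord expr2 mulr_natr.
Qed.

Lemma det_compress_eigen_sqr_le n k (A : 'M[C]_n) (lam : 'I_n -> C) (c : 'I_n -> C) (M : C) :
  (0 < n)%N -> (k <= n)%N -> char_poly A = \prod_j ('X - (lam j)%:P) ->
  (forall i j, `|A i j| <= c j) ->
  (forall g : {set 'I_n}, #|g| = k -> \prod_(i in g) c i ^+ 2 <= M) ->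
  `|\prod_(j < n | (j < k)%N) lam j| ^+ 2 <= (n%:R ^+ 2 / k%:R) ^+ k * M.
Proof.
move=> n_gt0 le_kn charA le_Ac le_cM.
have [Y Y_unitary <-] := unitary_compress_det_eigen n_gt0 le_kn charA.
apply: le_trans (det_compress_sqr_le A Y_unitary) _.
apply: le_trans (det_gram_colscale_le Y le_Ac) _.
apply: ler_wpM2l; first by rewrite exprn_ge0 // divr_ge0 ?exprn_ge0 ?ler0n.
apply: le_trans (det_gram_diag_le _ (M := M) _) _.
  by move=> g card_g; under eq_bigr do rewrite mxE; apply: le_cM.
by rewrite (unitarymxP Y_unitary) det1 mulr1.
Qed.

End Compression.

Section ComplexMatrices.
Variable R : realType.
Local Notation C := R[i].

Lemma cmodE (z : C) : `|z| = (cmod z)%:C%C.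
Proof. by []. Qed.

Lemma cmod_ge0 (z : C) : 0 <= cmod z.
Proof. by rewrite -ler0c -cmodE. Qed.

Lemma cmod_le_colnorm n (A : 'M[C]_n) i j : cmod (A i j) <= colnorm A j.
Proof. exact: (le_bigmax_cond 0 (P := xpredT) (fun i => cmod (A i j))). Qed.

Lemma colnorm_ge0 n (A : 'M[C]_n) j : 0 <= colnorm A j.
Proof. exact: bigmax_ge_id. Qed.

Lemma colnorm_trmx n (A : 'M[C]_n) : colnorm A^T =1 rownorm A.
Proof. by move=> i; apply: eq_bigr => j _; rewrite mxE. Qed.

Lemma eq_max_subset_prod n k (f g : 'I_n -> R) :
  f =1 g -> max_subset_prod k f = max_subset_prod k g.
Proof. by move=> eq_fg; apply: eq_bigr => h _; apply: eq_bigr => i _. Qed.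

Lemma max_subset_prod_ge0 n k (f : 'I_n -> R) : 0 <= max_subset_prod k f.
Proof. exact: bigmax_ge_id. Qed.

Lemma prod_le_max_subset_prod n k (f : 'I_n -> R) (g : {set 'I_n}) :
  #|g| = k -> \prod_(i in g) f i <= max_subset_prod k f.
Proof.
move=> card_g; apply: (le_bigmax_cond 0 (P := fun g : {set 'I_n} => #|g| == k)
  (fun g => \prod_(i in g) f i)); by rewrite card_g.
Qed.

Lemma eig_prod_le_colnorm n k (A : 'M[C]_n) (lam : 'I_n -> C) :
  (0 < k)%N -> (k <= n)%N -> char_poly A = \prod_j ('X - (lam j)%:P) ->
  cmod (\prod_(j < n | (j < k)%N) lam j)
    <= Num.sqrt (n%:R / k%:R) ^+ k * Num.sqrt n%:R ^+ k * max_subset_prod k (colnorm A).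
Proof.
move=> k_gt0 le_kn charA; set M := max_subset_prod k (colnorm A).
have le_Acol i j : `|A i j| <= (colnorm A j)%:C%C.
  by rewrite cmodE lecR cmod_le_colnorm.
have le_colM (g : {set 'I_n}) :
    #|g| = k -> \prod_(i in g) (colnorm A i)%:C%C ^+ 2 <= M%:C%C ^+ 2.
  move=> card_g; rewrite prodrXl -rmorph_prod -!rmorphXn lecR.
  rewrite lerXn2r ?nnegrE ?max_subset_prod_ge0 ?prod_le_max_subset_prod //.
  by apply: prodr_ge0 => i _; rewrite colnorm_ge0.
have sqr_le : cmod (\prod_(j < n | (j < k)%N) lam j) ^+ 2
    <= (n%:R ^+ 2 / k%:R) ^+ k * M ^+ 2.
  have := det_compress_eigen_sqr_le (leq_trans k_gt0 le_kn) le_kn charA le_Acol le_colM.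
  have -> : (n%:R ^+ 2 / k%:R) ^+ k * M%:C%C ^+ 2 =
      ((n%:R ^+ 2 / k%:R) ^+ k * M ^+ 2)%:C%C :> C.
    by rewrite rmorphM !rmorphXn fmorph_div rmorphXn !rmorph_nat.
  by rewrite cmodE -rmorphXn lecR.
rewrite -(ler_pXn2r (ltn0Sn 1)) ?nnegrE ?cmod_ge0 ?mulr_ge0 ?exprn_ge0 ?sqrtr_ge0
  ?max_subset_prod_ge0 //.
suff -> : (Num.sqrt (n%:R / k%:R) ^+ k * Num.sqrt n%:R ^+ k * M) ^+ 2
    = (n%:R ^+ 2 / k%:R) ^+ k * M ^+ 2 by [].
rewrite !exprMn -!exprM !(mulnC k 2) !exprM !sqr_sqrtr ?divr_ge0 ?ler0n //.
by rewrite !exprMn; ring.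
Qed.

End ComplexMatrices.

Theorem theorem3p13 (R : realType) (n k : nat) (A : 'M[R[i]]_n)
    (lam : 'I_n -> R[i]) :
  (0 < k)%N -> (k <= n)%N ->
  (* lam 0, ..., lam (n-1) are the eigenvalues of A, with multiplicity *)
  char_poly A = \prod_(j < n) ('X - (lam j)%:P) ->
  (* ordered by nonincreasing modulus *)
  (forall i j : 'I_n, (i <= j)%N -> cmod (lam j) <= cmod (lam i)) ->
  cmod (\prod_(j < n | (j < k)%N) lam j)
    <= Num.sqrt (n%:R / k%:R) ^+ k * Num.sqrt (n%:R) ^+ k
       * Num.min (max_subset_prod k (colnorm A)) (max_subset_prod k (rownorm A)).
Proof.
move=> k_gt0 le_kn charA _.
have col_bound := eig_prod_le_colnorm k_gt0 le_kn charA.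
have := eig_prod_le_colnorm (A := A^T) (lam := lam) k_gt0 le_kn.
rewrite char_poly_trmx (eq_max_subset_prod _ (colnorm_trmx A)) => /(_ charA) row_bound.
by rewrite minEle; case: ifP.
Qed.
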